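(* Let $\alpha$ be a curve in $\mathbb{R}^3$, let $\alpha_T$ be its tangent indicatrix, and let $\beta$ be a Mannheim-direction curve of $\alpha_T$ (an $X$-direction curve of $\alpha_T$ with $N_\beta=B_T$). Then: (i) $\alpha$ is a straight line if and only if $\beta$ is a helix; (ii) $\alpha$ is a slant helix if and only if $\beta$ is a slant helix.
   Context: Let $\alpha:I\subset\mathbb{R}\to\mathbb{R}^3$ be a unit-speed curve with curvature $\kappa>0$, torsion $\tau$ and Frenet frame $\{T,N,B\}$. The Frenet frame with $N=T'/\kappa$ is used throughout. The tangent indicatrix of $\alpha$ is the curve $\alpha_T=T$ on the unit sphere. Its arc length is $s_T=\int\kappa\,ds$. Its Frenet apparatus is $\{T_T,N_T,B_T,\kappa_T,\tau_T\}$, with $\frac{dT_T}{ds_T}=\kappa_TN_T$, $\frac{dN_T}{ds_T}=-\kappa_TT_T+\tau_TB_T$ and $\frac{dB_T}{ds_T}=-\tau_TN_T$. Let $x,y,z$ be real functions of $s_T$ with $x^2+y^2+z^2=1$, and set $X=xT_T+yN_T+zB_T$. An integral curve $\beta$ of $X$, meaning $d\beta/ds_T=X$, is an $X$-direction curve of $\alpha_T$. It is regarded as a unit-speed Frenet curve with frame $\{T_\beta=X,N_\beta,B_\beta\}$, curvature $\kappa_\beta>0$ and torsion $\tau_\beta$. $\beta$ is a Mannheim-direction curve of $\alpha_T$ if $N_\beta=B_T$. A curve with curvature $k>0$ and torsion $t$ is a helix if its unit tangent makes a constant angle with a fixed line; equivalently, $t/k$ is constant. It is a slant helix if its principal normal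 makes a constant angle with a fixed line; equivalently, $\frac{k^2}{(k^2+t^2)^{3/2}}(t/k)'$ is constant, where $'$ is the derivative with respect to arc length. *)

(* Vectors of R^3 are triples (x, y, z) : R * R * R; Coquelicot's
   product normed-module structure gives [is_derive] for R -> R^3
   (componentwise derivative). *)
From Stdlib Require Import Reals.
From Coquelicot Require Import Coquelicot.
Open Scope R_scope.

Definition vec := (R * R * R)%type.

Definition vx (u : vec) : R := fst (fst u).
Definition vy (u : vec) : R := snd (fst u).
Definition vz (u : vec) : R := snd u.

Definition vadd (u v : vec) : vec := (vx u + vx v, vy u + vy v, vz u + vz v).
Definition vscal (a : R) (u : vec) : vec := (a * vx u, a * vy u, a * vz u).
Definition dot (u v : vec) : R := vx u * vx v + vy u * vy v + vz u * vz v.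
Definition cross (u v : vec) : vec :=
  (vy u * vz v - vz u * vy v, vz u * vx v - vx u * vz v, vx u * vy v - vy u * vx v).

Definition ointerval (a b : Rbar) (s : R) : Prop :=
  Rbar_lt a s /\ Rbar_lt s b.

Definition frenet (D : R -> Prop) (c T N B : R -> vec) (k t : R -> R) : Prop :=
  forall s, D s ->
    is_derive c s (T s) /\
    is_derive T s (vscal (k s) (N s)) /\
    is_derive N s (vadd (vscal (- k s) (T s)) (vscal (t s) (B s))) /\
    is_derive B s (vscal (- t s) (N s)) /\
    0 < k s /\
    dot (T s) (T s) = 1 /\ dot (N s) (N s) = 1 /\ dot (T s) (N s) = 0 /\
    B s = cross (T s) (N s).

Definition straight_line (D : R -> Prop) (c : R -> vec) : Prop :=
  exists (p v : vec), v <> (0, 0, 0) /\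
    forall s, D s -> exists lambda : R, c s = vadd p (vscal lambda v).

Definition helix (D : R -> Prop) (k t : R -> R) : Prop :=
  exists C : R, forall s, D s -> t s / k s = C.

Definition slant_helix (D : R -> Prop) (k t : R -> R) : Prop :=
  exists C : R, forall s, D s ->
    ex_derive (fun u => t u / k u) s /\
    (k s) ^ 2 / Rpower ((k s) ^ 2 + (t s) ^ 2) (3 / 2)
      * Derive (fun u => t u / k u) s = C.

Definition image_dom (I : R -> Prop) (phi : R -> R) (u : R) : Prop :=
  exists s, I s /\ phi s = u.

(* The tangent indicatrix satisfies T_T o phi = N, hence
   kappa kappa_T N_T = -kappa T + tau B with (kappa kappa_T)^2 = kappa^2 + tau^2, and
   B_T is (tau T + kappa B) / (kappa kappa_T). Writing tau/kappa as the ratio of the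
   components of B_T along T and B and differentiating gives
   (tau/kappa)' = kappa kappa_T^2 tau_T, so the slant-helix invariant of alpha is
   tau_T / kappa_T.
   For the Mannheim-direction curve, T_beta is orthogonal to N_beta = B_T, so z = 0;
   differentiating T_beta . B_T = 0 and N_beta = B_T gives kappa_beta = tau_T y and
   tau_beta = tau_T x, while x' = kappa_T y and y' = -kappa_T x. Hence
   (tau_beta/kappa_beta)' = kappa_T / y^2 > 0 and the slant-helix invariant of beta is
   kappa_T / |tau_T|. Part (i) holds because on a nonempty interval both sides fail:
   alpha has kappa > 0 and beta has a non-constant tau_beta/kappa_beta. Part (ii)
   follows because tau_T has constant sign (tau_T y = kappa_beta > 0 with y continuous
   and nonvanishing on the interval phi(I)), so tau_T / kappa_T is constant iff
   kappa_T / |tau_T| is. *)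

From Stdlib Require Import Reals Lra Psatz Classical.
From Coquelicot Require Import Coquelicot.
Open Scope R_scope.

Ltac vec_ring := unfold dot, cross, vadd, vscal, vx, vy, vz; simpl; ring.

Lemma vec_eta (u : vec) : u = (vx u, vy u, vz u).
Proof. now destruct u as [[? ?] ?]. Qed.

Lemma dot_comm u v : dot u v = dot v u.
Proof. vec_ring. Qed.

Lemma dot_add_l u v w : dot (vadd u v) w = dot u w + dot v w.
Proof. vec_ring. Qed.

Lemma dot_add_r u v w : dot w (vadd u v) = dot w u + dot w v.
Proof. vec_ring. Qed.

Lemma dot_scal_l a u v : dot (vscal a u) v = a * dot u v.
Proof. vec_ring. Qed.

Lemma dot_scal_r a u v : dot u (vscal a v) = a * dot u v.
Proof. vec_ring. Qed.

Lemma cross_add_r u v w : cross u (vadd v w) = vadd (cross u v) (cross u w).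
Proof. unfold cross, vadd, vx, vy, vz; simpl; f_equal; [f_equal|]; ring. Qed.

Lemma cross_scal_r a u v : cross u (vscal a v) = vscal a (cross u v).
Proof. unfold cross, vscal, vx, vy, vz; simpl; f_equal; [f_equal|]; ring. Qed.

Lemma vscal_vscal a b u : vscal a (vscal b u) = vscal (a * b) u.
Proof. unfold vscal, vx, vy, vz; simpl; f_equal; [f_equal|]; ring. Qed.

Lemma dot_cross_l u v : dot (cross u v) u = 0.
Proof. vec_ring. Qed.

Lemma dot_cross_r u v : dot (cross u v) v = 0.
Proof. vec_ring. Qed.

Lemma dot_cross_cyclic u v w : dot (cross u v) w = dot (cross v w) u.
Proof. vec_ring. Qed.

Lemma dot_cross_cross u v w p :
  dot (cross u (cross v w)) p = dot u w * dot v p - dot u v * dot w p.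
Proof. vec_ring. Qed.

Lemma dot_cross_cross_lagrange u v p q :
  dot (cross u v) (cross p q) = dot u p * dot v q - dot u q * dot v p.
Proof. vec_ring. Qed.

Lemma dot_self_eq0 u : dot u u = 0 -> u = (0, 0, 0).
Proof.
destruct u as [[p q] r]; unfold dot, vx, vy, vz; simpl; intros H.
assert (p = 0) by nra; assert (q = 0) by nra; assert (r = 0) by nra.
now subst.
Qed.

Lemma vscal_inj a u v : a <> 0 -> vscal a u = vscal a v -> u = v.
Proof.
intros Ha E; rewrite (vec_eta u), (vec_eta v).
unfold vscal in E; injection E; intros Ez Ey Ex.
f_equal; [f_equal|]; eapply Rmult_eq_reg_l; eauto.
Qed.

Definition orthonormal_frame (t n b : vec) : Prop :=
  dot t t = 1 /\ dot n n = 1 /\ dot t n = 0 /\ b = cross t n.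

Lemma orthonormal_frame_binormal t n b : orthonormal_frame t n b ->
  dot b t = 0 /\ dot b n = 0 /\ dot b b = 1.
Proof.
intros (tt & nn & tn & ->).
rewrite dot_cross_l, dot_cross_r, dot_cross_cross_lagrange, tt, nn, (dot_comm n t), tn.
repeat split; ring.
Qed.

Lemma orthonormal_frame_parseval t n b v : orthonormal_frame t n b ->
  dot v v = dot v t ^ 2 + dot v n ^ 2 + dot v b ^ 2.
Proof.
intros (tt & nn & tn & ->).
assert (Gram : dot v (cross t n) ^ 2 =
  dot v v * (dot t t * dot n n - dot t n ^ 2)
  - dot v t * (dot t v * dot n n - dot t n * dot n v)
  + dot v n * (dot t v * dot t n - dot t t * dot n v)) by vec_ring.
rewrite Gram, tt, nn, tn, (dot_comm t v), (dot_comm n v); ring.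
Qed.

Lemma cross_orthogonal_frame_eq0 t n b v : orthonormal_frame t n b ->
  (forall w, dot (cross v w) t = 0) -> (forall w, dot (cross v w) n = 0) -> v = (0, 0, 0).
Proof.
intros Hf Ht Hn; pose proof Hf as (tt & nn & tn & Hb).
assert (vt : dot v t = 0).
{ specialize (Hn (cross t n)); rewrite dot_cross_cross, nn, tn in Hn; lra. }
assert (vn : dot v n = 0).
{ specialize (Ht (cross t n)); rewrite dot_cross_cross, tt, (dot_comm n t), tn in Ht; lra. }
assert (vb : dot v b = 0).
{ rewrite Hb, dot_comm, dot_cross_cyclic, dot_cross_cyclic; apply Hn. }
apply dot_self_eq0; rewrite (orthonormal_frame_parseval t n b v Hf), vt, vn, vb; ring.
Qed.

Lemma is_derive_vx (f : R -> vec) s l :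
  is_derive f s l -> is_derive (fun t => vx (f t)) s (vx l).
Proof.
intros H; eapply filterdiff_ext_lin.
- apply (filterdiff_comp' f (fun u => fst (fst u)) s _ (fun u => fst (fst u)) H).
  apply filterdiff_linear, (is_linear_comp fst fst); apply is_linear_fst.
- reflexivity.
Qed.

Lemma is_derive_vy (f : R -> vec) s l :
  is_derive f s l -> is_derive (fun t => vy (f t)) s (vy l).
Proof.
intros H; eapply filterdiff_ext_lin.
- apply (filterdiff_comp' f (fun u => snd (fst u)) s _ (fun u => snd (fst u)) H).
  apply filterdiff_linear, (is_linear_comp fst snd).
  + apply is_linear_fst.
  + apply is_linear_snd.
- reflexivity.
Qed.

Lemma is_derive_vz (f : R -> vec) s l :
  is_derive f s l -> is_derive (fun t => vz (f t)) s (vz l).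
Proof.
intros H; eapply filterdiff_ext_lin.
- apply (filterdiff_comp' f snd s _ snd H), filterdiff_linear, is_linear_snd.
- reflexivity.
Qed.

Lemma is_derive_eq (f : R -> R) s l1 l2 :
  is_derive f s l1 -> is_derive f s l2 -> l1 = l2.
Proof.
intros H1 H2; now rewrite <- (is_derive_unique _ _ _ H1), (is_derive_unique _ _ _ H2).
Qed.

Lemma is_derive_vec_eq (f : R -> vec) s l1 l2 :
  is_derive f s l1 -> is_derive f s l2 -> l1 = l2.
Proof.
intros H1 H2; rewrite (vec_eta l1), (vec_eta l2); f_equal; [f_equal|].
- eapply is_derive_eq; apply is_derive_vx; eassumption.
- eapply is_derive_eq; apply is_derive_vy; eassumption.
- eapply is_derive_eq; apply is_derive_vz; eassumption.
Qed.

Lemma is_derive_dot (u v : R -> vec) s du dv :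
  is_derive u s du -> is_derive v s dv ->
  is_derive (fun t => dot (u t) (v t)) s (dot du (v s) + dot (u s) dv).
Proof.
intros Hu Hv.
assert (Hmul : forall (f g : R -> R) df dg, is_derive f s df -> is_derive g s dg ->
          is_derive (fun t => f t * g t) s (df * g s + f s * dg))
  by (intros f g df dg Hf Hg; apply (is_derive_mult f g s df dg Hf Hg), Rmult_comm).
pose proof (Hmul _ _ _ _ (is_derive_vx _ _ _ Hu) (is_derive_vx _ _ _ Hv)) as Hx.
pose proof (Hmul _ _ _ _ (is_derive_vy _ _ _ Hu) (is_derive_vy _ _ _ Hv)) as Hy.
pose proof (Hmul _ _ _ _ (is_derive_vz _ _ _ Hu) (is_derive_vz _ _ _ Hv)) as Hz.
replace (dot du (v s) + dot (u s) dv) with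
  ((vx du * vx (v s) + vx (u s) * vx dv) + (vy du * vy (v s) + vy (u s) * vy dv)
   + (vz du * vz (v s) + vz (u s) * vz dv)) by (unfold dot; ring).
exact (is_derive_plus _ _ s _ _ (is_derive_plus _ _ s _ _ Hx Hy) Hz).
Qed.

Lemma is_derive_comp_vec (f : R -> vec) (g : R -> R) s df dg :
  is_derive f (g s) df -> is_derive g s dg ->
  is_derive (fun t => f (g t)) s (vscal dg df).
Proof.
intros Hf Hg.
replace (vscal dg df) with (scal dg df) by now destruct df as [[? ?] ?].
exact (is_derive_comp f g s df dg Hf Hg).
Qed.

Lemma is_derive_continuity_pt (f : R -> R) s l : is_derive f s l -> continuity_pt f s.
Proof.
intros H; apply continuity_pt_filterlim, (ex_derive_continuous f); now exists l.
Qed.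

Lemma is_derive_open_ext {V : NormedModule R_AbsRing} (D : R -> Prop) (f g : R -> V) s l :
  open D -> D s -> (forall t, D t -> f t = g t) -> is_derive f s l -> is_derive g s l.
Proof. intros HD Ds Efg; apply is_derive_ext_loc, (filter_imp D); auto. Qed.

Lemma is_derive_open_const (D : R -> Prop) (f : R -> R) c s :
  open D -> D s -> (forall t, D t -> f t = c) -> is_derive f s 0.
Proof.
intros HD Ds Ef; apply (is_derive_open_ext D (fun _ => c)); auto.
- intros t Dt; symmetry; auto.
- exact (is_derive_const (V := R_NormedModule) c s).
Qed.

Lemma is_derive_dot_const_l (w : vec) (u : R -> vec) s du :
  is_derive u s du -> is_derive (fun t => dot w (u t)) s (dot w du).
Proof.
intros Hu.
replace (dot w du) with (dot (0, 0, 0) (u s) + dot w du) by (unfold dot, vx, vy, vz; simpl; ring).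
exact (is_derive_dot (fun _ => w) u s _ _ (is_derive_const w s) Hu).
Qed.

Lemma open_ointerval a b : open (ointerval a b).
Proof. apply open_and; [apply open_Rbar_gt | apply open_Rbar_lt]. Qed.

Lemma ointerval_between a b s1 s2 t :
  ointerval a b s1 -> ointerval a b s2 -> s1 <= t <= s2 -> ointerval a b t.
Proof.
intros [Ha _] [_ Hb] Ht; split.
- destruct a; simpl in *; lra.
- destruct b; simpl in *; lra.
Qed.

Lemma ointerval_IVT a b (f : R -> R) s1 s2 c :
  (forall t, ointerval a b t -> continuity_pt f t) ->
  ointerval a b s1 -> ointerval a b s2 -> s1 < s2 ->
  f s1 < c < f s2 \/ f s2 < c < f s1 ->
  exists t, ointerval a b t /\ f t = c.
Proof.
intros Hf I1 I2 H12 Hc.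
assert (Hf12 : forall t, s1 <= t <= s2 -> continuity_pt f t)
  by (intros t Ht; apply Hf; now apply (ointerval_between a b s1 s2)).
destruct Hc as [Hc | Hc].
- destruct (Ranalysis5.IVT_interv (fun t => f t - c) s1 s2) as [t [Ht E]];
    [intros; apply continuity_pt_minus, continuity_pt_const; auto; now intros ? ?
    | assumption | lra | lra |].
  exists t; split; [now apply (ointerval_between a b s1 s2) | lra].
- destruct (Ranalysis5.IVT_interv (fun t => c - f t) s1 s2) as [t [Ht E]];
    [intros; apply continuity_pt_minus; [apply continuity_pt_const; now intros ? ? | auto]
    | assumption | lra | lra |].
  exists t; split; [now apply (ointerval_between a b s1 s2) | lra].
Qed.

Lemma ointerval_sign_const a b (f : R -> R) :
  (forall t, ointerval a b t -> continuity_pt f t) ->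
  (forall t, ointerval a b t -> f t <> 0) ->
  forall s1 s2, ointerval a b s1 -> ointerval a b s2 -> 0 < f s1 * f s2.
Proof.
intros Hf Hnz s1 s2 I1 I2.
destruct (Rlt_or_le 0 (f s1 * f s2)) as [| Hle]; [assumption | exfalso].
assert (Hopp : f s1 < 0 < f s2 \/ f s2 < 0 < f s1).
{ pose proof (Hnz s1 I1); pose proof (Hnz s2 I2).
  destruct (Rlt_or_le (f s1) 0), (Rlt_or_le (f s2) 0); nra. }
destruct (Rtotal_order s1 s2) as [H12 | [<- | H21]].
- destruct (ointerval_IVT a b f s1 s2 0 Hf I1 I2 H12) as [t [It Ft]]; [tauto |].
  exact (Hnz t It Ft).
- lra.
- destruct (ointerval_IVT a b f s2 s1 0 Hf I2 I1 H21) as [t [It Ft]]; [tauto |].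
  exact (Hnz t It Ft).
Qed.

Lemma ointerval_increasing a b (phi dphi : R -> R) :
  (forall s, ointerval a b s -> is_derive phi s (dphi s)) ->
  (forall s, ointerval a b s -> 0 < dphi s) ->
  forall s1 s2, ointerval a b s1 -> ointerval a b s2 -> s1 < s2 -> phi s1 < phi s2.
Proof.
intros Hphi Hpos s1 s2 I1 I2 H12.
assert (I12 : forall t, s1 <= t <= s2 -> ointerval a b t)
  by (intros; now apply (ointerval_between a b s1 s2)).
destruct (MVT_gen phi s1 s2 dphi) as [c [Hc E]];
  rewrite ?Rmin_left, ?Rmax_right in * by lra.
- intros t Ht; apply Hphi, I12; lra.
- intros t Ht; apply (is_derive_continuity_pt _ _ (dphi t)), Hphi, I12; lra.
- pose proof (Hpos c (I12 c Hc)); nra.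
Qed.

Lemma open_image_ointerval a b (phi dphi : R -> R) :
  (forall s, ointerval a b s -> is_derive phi s (dphi s)) ->
  (forall s, ointerval a b s -> 0 < dphi s) ->
  open (image_dom (ointerval a b) phi).
Proof.
intros Hphi Hpos u [s [Is <-]].
destruct (open_ointerval a b s Is) as [eps Heps].
assert (Hball : forall t, Rabs (t - s) < eps -> ointerval a b t) by exact Heps.
pose proof (cond_pos eps).
set (s1 := s - eps / 2); set (s2 := s + eps / 2).
assert (I1 : ointerval a b s1) by (apply Hball; unfold s1; rewrite Rabs_left; lra).
assert (I2 : ointerval a b s2) by (apply Hball; unfold s2; rewrite Rabs_right; lra).
assert (L1 : phi s1 < phi s)
  by (apply (ointerval_increasing a b phi dphi); auto; unfold s1; lra).
assert (L2 : phi s < phi s2)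
  by (apply (ointerval_increasing a b phi dphi); auto; unfold s2; lra).
assert (Hd : 0 < Rmin (phi s - phi s1) (phi s2 - phi s)) by (apply Rmin_pos; lra).
exists (mkposreal _ Hd); intros w Hw.
change (Rabs (w - phi s) < Rmin (phi s - phi s1) (phi s2 - phi s)) in Hw.
pose proof (Rmin_l (phi s - phi s1) (phi s2 - phi s)).
pose proof (Rmin_r (phi s - phi s1) (phi s2 - phi s)).
apply Rabs_def2 in Hw.
destruct (ointerval_IVT a b phi s1 s2 w) as [t [It Et]]; auto.
- intros t It; exact (is_derive_continuity_pt _ _ _ (Hphi t It)).
- unfold s1, s2; lra.
- lra.
- now exists t.
Qed.

Lemma image_dom_image (D : R -> Prop) phi s : D s -> image_dom D phi (phi s).
Proof. intros Ds; now exists s. Qed.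

Lemma image_dom_exists_const (D : R -> Prop) (phi f : R -> R) :
  (exists C, forall u, image_dom D phi u -> f u = C) <->
  (exists C, forall s, D s -> f (phi s) = C).
Proof.
split; intros [C HC]; exists C.
- intros s Ds; exact (HC _ (image_dom_image D phi s Ds)).
- intros u [s [Ds <-]]; auto.
Qed.

Lemma ointerval_image_sign_const a b (phi dphi f g : R -> R) :
  (forall s, ointerval a b s -> is_derive phi s (dphi s)) ->
  (forall u, image_dom (ointerval a b) phi u -> ex_derive g u) ->
  (forall u, image_dom (ointerval a b) phi u -> 0 < f u * g u) ->
  forall s1 s2, ointerval a b s1 -> ointerval a b s2 -> 0 < f (phi s1) * f (phi s2).
Proof.
intros Hphi Hg Hfg s1 s2 I1 I2.
assert (Hsign : 0 < g (phi s1) * g (phi s2)).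
{ apply (ointerval_sign_const a b (fun s => g (phi s))); auto.
  - intros s Is; destruct (Hg _ (image_dom_image _ phi s Is)) as [dg Dg].
    exact (is_derive_continuity_pt _ _ _ (is_derive_comp g phi s dg _ Dg (Hphi s Is))).
  - intros s Is E; pose proof (Hfg _ (image_dom_image _ phi s Is)).
    rewrite E in *; lra. }
pose proof (Hfg _ (image_dom_image _ phi s1 I1)).
pose proof (Hfg _ (image_dom_image _ phi s2 I2)).
assert (0 < (f (phi s1) * f (phi s2)) * (g (phi s1) * g (phi s2))) by nra.
nra.
Qed.

Section FrenetFrame.

Context {D : R -> Prop} {c T N B : R -> vec} {k t : R -> R}.
Hypothesis HF : frenet D c T N B k t.

Lemma frenet_curve_derive s : D s -> is_derive c s (T s).
Proof. intros Ds; now destruct (HF s Ds). Qed.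

Lemma frenet_tangent_derive s : D s -> is_derive T s (vscal (k s) (N s)).
Proof. intros Ds; now destruct (HF s Ds) as (_ & H & _). Qed.

Lemma frenet_normal_derive s : D s ->
  is_derive N s (vadd (vscal (- k s) (T s)) (vscal (t s) (B s))).
Proof. intros Ds; now destruct (HF s Ds) as (_ & _ & H & _). Qed.

Lemma frenet_binormal_derive s : D s -> is_derive B s (vscal (- t s) (N s)).
Proof. intros Ds; now destruct (HF s Ds) as (_ & _ & _ & H & _). Qed.

Lemma frenet_curvature_pos s : D s -> 0 < k s.
Proof. intros Ds; now destruct (HF s Ds) as (_ & _ & _ & _ & H & _). Qed.

Lemma frenet_orthonormal s : D s -> orthonormal_frame (T s) (N s) (B s).
Proof. intros Ds; now destruct (HF s Ds) as (_ & _ & _ & _ & _ & H). Qed.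

End FrenetFrame.

Lemma frenet_not_straight_line D c T N B k t s0 :
  open D -> D s0 -> frenet D c T N B k t -> ~ straight_line D c.
Proof.
intros HD Ds0 HF [p [v [Hv Hline]]]; apply Hv.
assert (HT : forall w s, D s -> dot (cross v w) (T s) = 0).
{ intros w s Ds.
  assert (Hc : forall s', D s' -> dot (cross v w) (c s') = dot (cross v w) p).
  { intros s' Ds'; destruct (Hline s' Ds') as [l ->].
    rewrite dot_add_r, dot_scal_r, dot_comm, dot_cross_l; ring. }
  apply (is_derive_eq (fun s' => dot (cross v w) (c s')) s).
  - exact (is_derive_dot_const_l _ _ _ _ (frenet_curve_derive HF s Ds)).
  - exact (is_derive_open_const D _ _ s HD Ds Hc). }
assert (HN : forall w, dot (cross v w) (N s0) = 0).
{ intros w.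
  assert (E : dot (cross v w) (vscal (k s0) (N s0)) = 0).
  { apply (is_derive_eq (fun s => dot (cross v w) (T s)) s0).
    - exact (is_derive_dot_const_l _ _ _ _ (frenet_tangent_derive HF s0 Ds0)).
    - exact (is_derive_open_const D _ _ s0 HD Ds0 (HT w)). }
  rewrite dot_scal_r in E; pose proof (frenet_curvature_pos HF s0 Ds0); nra. }
apply (cross_orthogonal_frame_eq0 _ _ _ v (frenet_orthonormal HF s0 Ds0));
  [intros w; now apply HT | exact HN].
Qed.

Lemma Rpower_sqr_3_2 r : 0 < r -> Rpower (r ^ 2) (3 / 2) = r ^ 3.
Proof.
intros Hr; rewrite <- (Rpower_pow 2 r Hr), Rpower_mult.
replace (INR 2 * (3 / 2)) with (INR 3) by (simpl; field).
now apply Rpower_pow.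
Qed.

Definition slant_invariant (k t : R -> R) (s : R) : R :=
  k s ^ 2 / Rpower (k s ^ 2 + t s ^ 2) (3 / 2) * Derive (fun u => t u / k u) s.

Lemma slant_invariant_is_derive k t s d r :
  is_derive (fun u => t u / k u) s d -> 0 < r -> r ^ 2 = k s ^ 2 + t s ^ 2 ->
  slant_invariant k t s = k s ^ 2 / r ^ 3 * d.
Proof.
intros Hd Hr Hr2; unfold slant_invariant.
replace (Derive _ s) with d by (symmetry; now apply is_derive_unique).
now rewrite <- Hr2, Rpower_sqr_3_2.
Qed.

Lemma slant_helix_iff D k t (f : R -> R) :
  (forall s, D s -> ex_derive (fun u => t u / k u) s) ->
  (forall s, D s -> slant_invariant k t s = f s) ->
  slant_helix D k t <-> exists C, forall s, D s -> f s = C.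
Proof.
intros Hex Hf; split; intros [C HC]; exists C; intros s Ds.
- rewrite <- (Hf s Ds); apply HC, Ds.
- split; [auto |]; rewrite <- (HC s Ds); apply Hf, Ds.
Qed.

Lemma helix_ratio_derive_zero D k t s :
  open D -> D s -> helix D k t -> is_derive (fun u => t u / k u) s 0.
Proof. intros HD Ds [C HC]; exact (is_derive_open_const D _ C s HD Ds HC). Qed.

Lemma const_ratio_iff_const_inv_abs (D : R -> Prop) (p q : R -> R) :
  (forall s, D s -> 0 < q s) ->
  (forall s1 s2, D s1 -> D s2 -> 0 < p s1 * p s2) ->
  (exists C, forall s, D s -> p s / q s = C) <->
  (exists C, forall s, D s -> q s / Rabs (p s) = C).
Proof.
intros Hq Hp.
destruct (classic (exists s0, D s0)) as [[s0 Ds0] | Hempty].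
2:{ split; intros _; exists 0; intros s Ds; exfalso; eauto. }
assert (Hp0 : forall s, D s -> p s <> 0)
  by (intros s Ds E; pose proof (Hp s s Ds Ds); rewrite E in *; lra).
assert (Hsign : forall s, D s -> p s / Rabs (p s) = p s0 / Rabs (p s0)).
{ intros s Ds; pose proof (Hp s s0 Ds Ds0); pose proof (Hp0 s Ds); pose proof (Hp0 s0 Ds0).
  destruct (Rlt_or_le 0 (p s0)).
  - rewrite !Rabs_right by nra; field; auto.
  - rewrite !Rabs_left by nra; field; auto. }
split; intros [C HC].
- exists (/ Rabs C); intros s Ds.
  pose proof (Hq s Ds); pose proof (Hp0 s Ds).
  rewrite <- (HC s Ds); unfold Rdiv.
  rewrite Rabs_mult, Rabs_inv, (Rabs_right (q s)) by lra.
  field; split; [lra | now apply Rabs_no_R0].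
- exists (p s0 / Rabs (p s0) / C); intros s Ds.
  pose proof (Hq s Ds); pose proof (Hp0 s Ds).
  rewrite <- (HC s Ds), <- (Hsign s Ds).
  field; split; [now apply Rabs_no_R0 | lra].
Qed.

(** * The tangent indicatrix *)

Lemma frame_rotation (t n b n' b' : vec) (k w r : R) :
  orthonormal_frame t n b -> orthonormal_frame n n' b' ->
  vscal r n' = vadd (vscal (- k) t) (vscal w b) ->
  r ^ 2 = k ^ 2 + w ^ 2 /\ r * dot n' t = - k /\ r * dot n' b = w /\
  r * dot b' t = w /\ r * dot b' b = k /\ dot b' n = 0.
Proof.
intros Hf Hf' E.
pose proof Hf as (tt & nn & tn & Hb).
destruct (orthonormal_frame_binormal t n b Hf) as (bt & bn & bb).
pose proof Hf' as (_ & n'n' & _ & Hb').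
assert (Hn' : forall p, r * dot n' p = - k * dot t p + w * dot b p)
  by (intros p; rewrite <- dot_scal_l, E, dot_add_l, !dot_scal_l; ring).
assert (Hb'r : forall p, r * dot b' p = - k * dot (cross n t) p + w * dot (cross n b) p)
  by (intros p; rewrite Hb', <- dot_scal_l, <- cross_scal_r, E, cross_add_r,
        dot_add_l, !cross_scal_r, !dot_scal_l; ring).
repeat split.
- replace (r ^ 2) with (dot (vscal r n') (vscal r n'))
    by (rewrite dot_scal_l, dot_scal_r, n'n'; ring).
  rewrite E, dot_add_l, !dot_add_r, !dot_scal_l, !dot_scal_r, tt, bb, bt, (dot_comm t b), bt.
  ring.
- rewrite Hn', tt, bt; ring.
- rewrite Hn', (dot_comm t b), bt, bb; ring.
- rewrite Hb'r, dot_cross_r, Hb, dot_cross_cross, nn, tt, (dot_comm n t), tn; ring.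
- rewrite Hb'r, Hb, dot_cross_r, dot_cross_cross_lagrange, nn, tt, (dot_comm n t), tn; ring.
- rewrite Hb', dot_cross_l; ring.
Qed.

Section TangentIndicatrix.

Context {D : R -> Prop} {alpha T N B : R -> vec} {kappa tau phi : R -> R}
  {alphaT TT NT BT : R -> vec} {kappaT tauT : R -> R}.
Hypotheses (HD : open D) (Halpha : frenet D alpha T N B kappa tau)
  (Hphi : forall s, D s -> is_derive phi s (kappa s))
  (HalphaT : forall s, D s -> alphaT (phi s) = T s)
  (HF : frenet (image_dom D phi) alphaT TT NT BT kappaT tauT).

Lemma indicatrix_tangent s : D s -> TT (phi s) = N s.
Proof.
intros Ds; apply (vscal_inj (kappa s)).
{ pose proof (frenet_curvature_pos Halpha s Ds); lra. }
apply (is_derive_vec_eq T s).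
- apply (is_derive_open_ext D (fun u => alphaT (phi u))); auto.
  exact (is_derive_comp_vec _ _ _ _ _
           (frenet_curve_derive HF _ (image_dom_image D phi s Ds)) (Hphi s Ds)).
- exact (frenet_tangent_derive Halpha s Ds).
Qed.

Lemma indicatrix_normal s : D s ->
  vscal (kappa s * kappaT (phi s)) (NT (phi s))
  = vadd (vscal (- kappa s) (T s)) (vscal (tau s) (B s)).
Proof.
intros Ds; rewrite <- vscal_vscal.
apply (is_derive_vec_eq N s).
- apply (is_derive_open_ext D (fun u => TT (phi u))); auto using indicatrix_tangent.
  exact (is_derive_comp_vec _ _ _ _ _
           (frenet_tangent_derive HF _ (image_dom_image D phi s Ds)) (Hphi s Ds)).
- exact (frenet_normal_derive Halpha s Ds).
Qed.

Lemma indicatrix_frame s : D s ->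
  let r := kappa s * kappaT (phi s) in
  r ^ 2 = kappa s ^ 2 + tau s ^ 2 /\
  r * dot (NT (phi s)) (T s) = - kappa s /\ r * dot (NT (phi s)) (B s) = tau s /\
  r * dot (BT (phi s)) (T s) = tau s /\ r * dot (BT (phi s)) (B s) = kappa s /\
  dot (BT (phi s)) (N s) = 0.
Proof.
intros Ds r; apply frame_rotation.
- exact (frenet_orthonormal Halpha s Ds).
- rewrite <- (indicatrix_tangent s Ds).
  exact (frenet_orthonormal HF _ (image_dom_image D phi s Ds)).
- exact (indicatrix_normal s Ds).
Qed.

Lemma indicatrix_curvatures_pos s : D s -> 0 < kappa s /\ 0 < kappaT (phi s).
Proof.
intros Ds; split.
- exact (frenet_curvature_pos Halpha s Ds).
- exact (frenet_curvature_pos HF _ (image_dom_image D phi s Ds)).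
Qed.

Lemma indicatrix_ratio_derive s : D s ->
  is_derive (fun u => tau u / kappa u) s (kappa s * kappaT (phi s) ^ 2 * tauT (phi s)).
Proof.
intros Ds.
set (g u := dot (BT (phi u)) (T u)); set (h u := dot (BT (phi u)) (B u)).
assert (Hgh : forall u, D u -> g u / h u = tau u / kappa u).
{ intros u Du; destruct (indicatrix_frame u Du) as (_ & _ & _ & Hg & Hh & _).
  destruct (indicatrix_curvatures_pos u Du) as [k0 kT0].
  assert (h u <> 0) by (intros E; unfold h in *; rewrite E in Hh; lra).
  transitivity (kappa u * kappaT (phi u) * g u / (kappa u * kappaT (phi u) * h u)).
  - field; split; [assumption | nra].
  - unfold g, h; now rewrite Hg, Hh. }
destruct (indicatrix_frame s Ds) as (Hr2 & Hnt & Hnb & Hbt & Hbb & Hbn).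
destruct (indicatrix_curvatures_pos s Ds) as [k0 kT0].
set (r := kappa s * kappaT (phi s)) in *.
assert (r0 : 0 < r) by (unfold r; nra).
assert (DBT := is_derive_comp_vec _ _ _ _ _
  (frenet_binormal_derive HF _ (image_dom_image D phi s Ds)) (Hphi s Ds)).
assert (Dg := is_derive_dot _ _ _ _ _ DBT (frenet_tangent_derive Halpha s Ds)).
assert (Dh := is_derive_dot _ _ _ _ _ DBT (frenet_binormal_derive Halpha s Ds)).
assert (h0 : h s <> 0) by (intros E; unfold h in *; rewrite E in Hbb; lra).
apply (is_derive_open_ext D (fun u => g u / h u)); auto.
replace (kappa s * kappaT (phi s) ^ 2 * tauT (phi s)) with
  (((dot (vscal (kappa s) (vscal (- tauT (phi s)) (NT (phi s)))) (T s)
     + dot (BT (phi s)) (vscal (kappa s) (N s))) * h s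
   - g s * (dot (vscal (kappa s) (vscal (- tauT (phi s)) (NT (phi s)))) (B s)
     + dot (BT (phi s)) (vscal (- tau s) (N s)))) / h s ^ 2).
{ exact (is_derive_div g h s _ _ Dg Dh h0). }
unfold g, h; rewrite !dot_scal_l, !dot_scal_r, Hbn.
assert (Hdiv : forall p q, r * p = q -> p = q / r) by (intros p q <-; field; lra).
rewrite (Hdiv _ _ Hnt), (Hdiv _ _ Hnb), (Hdiv _ _ Hbt), (Hdiv _ _ Hbb).
transitivity (tauT (phi s) * (kappa s ^ 2 + tau s ^ 2) / kappa s); [field; lra |].
rewrite <- Hr2; unfold r; field; lra.
Qed.

Lemma indicatrix_slant_invariant s : D s ->
  slant_invariant kappa tau s = tauT (phi s) / kappaT (phi s).
Proof.
intros Ds; destruct (indicatrix_frame s Ds) as (Hr2 & _).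
destruct (indicatrix_curvatures_pos s Ds) as [k0 kT0].
rewrite (slant_invariant_is_derive _ _ _ _ (kappa s * kappaT (phi s))
          (indicatrix_ratio_derive s Ds)) by (assumption || nra).
field; lra.
Qed.

End TangentIndicatrix.

(** * Mannheim-direction curves *)

Lemma frame_coordinates t n b x y z : orthonormal_frame t n b ->
  let v := vadd (vadd (vscal x t) (vscal y n)) (vscal z b) in
  dot v t = x /\ dot v n = y /\ dot v b = z.
Proof.
intros Hf v; pose proof Hf as (tt & nn & tn & _).
destruct (orthonormal_frame_binormal t n b Hf) as (bt & bn & bb).
unfold v; rewrite !dot_add_l, !dot_scal_l, tt, nn, bb, bt, bn, tn, (dot_comm n t), tn,
  (dot_comm t b), bt, (dot_comm n b), bn.
repeat split; ring.
Qed.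

Section MannheimDirection.

Context {D : R -> Prop} {alphaT TT NT BT : R -> vec} {kappaT tauT : R -> R}
  {x y z : R -> R} {beta Tb Nb Bb : R -> vec} {kappab taub : R -> R}.
Hypotheses (HD : open D) (HF : frenet D alphaT TT NT BT kappaT tauT)
  (Hxyz : forall u, D u -> x u ^ 2 + y u ^ 2 + z u ^ 2 = 1)
  (HX : forall u, D u ->
     Tb u = vadd (vadd (vscal (x u) (TT u)) (vscal (y u) (NT u))) (vscal (z u) (BT u)))
  (Hbeta : frenet D beta Tb Nb Bb kappab taub)
  (HM : forall u, D u -> Nb u = BT u).

Lemma mannheim_tangent_binormal u : D u -> dot (Tb u) (BT u) = 0.
Proof.
intros Du; rewrite <- (HM u Du).
now destruct (frenet_orthonormal Hbeta u Du) as (_ & _ & H & _).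
Qed.

Lemma mannheim_coordinates u : D u ->
  dot (Tb u) (TT u) = x u /\ dot (Tb u) (NT u) = y u /\ z u = 0.
Proof.
intros Du.
destruct (frame_coordinates _ _ _ (x u) (y u) (z u) (frenet_orthonormal HF u Du))
  as (Hx & Hy & Hz).
rewrite <- (HX u Du) in Hx, Hy, Hz.
rewrite mannheim_tangent_binormal in Hz by assumption.
repeat split; auto.
Qed.

Lemma mannheim_unit u : D u -> x u ^ 2 + y u ^ 2 = 1.
Proof.
intros Du; destruct (mannheim_coordinates u Du) as (_ & _ & Hz).
pose proof (Hxyz u Du); rewrite Hz in *; lra.
Qed.

Lemma mannheim_curvature u : D u -> kappab u = tauT u * y u.
Proof.
intros Du.
assert (E : dot (vscal (kappab u) (Nb u)) (BT u) + dot (Tb u) (vscal (- tauT u) (NT u)) = 0).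
{ apply (is_derive_eq (fun t => dot (Tb t) (BT t)) u).
  - exact (is_derive_dot _ _ _ _ _ (frenet_tangent_derive Hbeta u Du)
             (frenet_binormal_derive HF u Du)).
  - exact (is_derive_open_const D _ 0 u HD Du mannheim_tangent_binormal). }
destruct (orthonormal_frame_binormal _ _ _ (frenet_orthonormal HF u Du)) as (_ & _ & bb).
destruct (mannheim_coordinates u Du) as (_ & Hy & _).
rewrite dot_scal_l, dot_scal_r, (HM u Du), bb, Hy in E; lra.
Qed.

Lemma mannheim_torsion u : D u -> taub u = tauT u * x u.
Proof.
intros Du.
assert (E : vadd (vscal (- kappab u) (Tb u)) (vscal (taub u) (Bb u)) = vscal (- tauT u) (NT u)).
{ apply (is_derive_vec_eq Nb u).
  - exact (frenet_normal_derive Hbeta u Du).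
  - apply (is_derive_open_ext D BT); auto.
    + intros t Dt; now rewrite HM.
    + exact (frenet_binormal_derive HF u Du). }
apply (f_equal (fun v => dot v (Bb u))) in E.
pose proof (frenet_orthonormal Hbeta u Du) as Hfb.
destruct (orthonormal_frame_binormal _ _ _ Hfb) as (bt & _ & bb).
destruct Hfb as (_ & _ & _ & Hb).
destruct (frenet_orthonormal HF u Du) as (_ & nn & tn & HbT).
destruct (mannheim_coordinates u Du) as (Hx & Hy & _).
rewrite dot_add_l, !dot_scal_l, (dot_comm (Tb u)), bt, bb in E.
rewrite (dot_comm (NT u)), Hb, (HM u Du), HbT, dot_cross_cross, tn, nn, Hx in E.
lra.
Qed.

Lemma mannheim_nondegenerate u : D u -> tauT u <> 0 /\ y u <> 0.
Proof.
intros Du; pose proof (frenet_curvature_pos Hbeta u Du).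
rewrite (mannheim_curvature u Du) in *.
split; intros E; rewrite E in *; lra.
Qed.

Lemma mannheim_x_derive u : D u -> is_derive x u (kappaT u * y u).
Proof.
intros Du.
assert (Dx := is_derive_dot _ _ _ _ _ (frenet_tangent_derive Hbeta u Du)
                (frenet_tangent_derive HF u Du)).
destruct (orthonormal_frame_binormal _ _ _ (frenet_orthonormal HF u Du)) as (bt & _).
destruct (mannheim_coordinates u Du) as (_ & Hy & _).
rewrite dot_scal_l, dot_scal_r, (HM u Du), bt, Hy, Rmult_0_r, Rplus_0_l in Dx.
apply (is_derive_open_ext D (fun t => dot (Tb t) (TT t))); auto.
intros t Dt; apply mannheim_coordinates, Dt.
Qed.

Lemma mannheim_y_derive u : D u -> is_derive y u (- kappaT u * x u).
Proof.
intros Du.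
assert (Dy := is_derive_dot _ _ _ _ _ (frenet_tangent_derive Hbeta u Du)
                (frenet_normal_derive HF u Du)).
destruct (orthonormal_frame_binormal _ _ _ (frenet_orthonormal HF u Du)) as (_ & bn & _).
destruct (mannheim_coordinates u Du) as (Hx & _).
rewrite dot_scal_l, dot_add_r, !dot_scal_r, (HM u Du), bn, Hx,
  mannheim_tangent_binormal in Dy by assumption.
replace (- kappaT u * x u) with (kappab u * 0 + (- kappaT u * x u + tauT u * 0)) by ring.
apply (is_derive_open_ext D (fun t => dot (Tb t) (NT t))); auto.
intros t Dt; apply mannheim_coordinates, Dt.
Qed.

Lemma mannheim_ratio_derive u : D u ->
  is_derive (fun t => taub t / kappab t) u (kappaT u / y u ^ 2).
Proof.
intros Du; destruct (mannheim_nondegenerate u Du) as [tT0 y0].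
apply (is_derive_open_ext D (fun t => x t / y t)); auto.
- intros t Dt; destruct (mannheim_nondegenerate t Dt).
  change (x t / y t = taub t / kappab t).
  rewrite mannheim_curvature, mannheim_torsion by assumption; field; tauto.
- replace (kappaT u / y u ^ 2) with
    ((kappaT u * y u * y u - x u * (- kappaT u * x u)) / y u ^ 2)
    by (rewrite <- (Rmult_1_r (kappaT u)) at 3; rewrite <- (mannheim_unit u Du); field; auto).
  exact (is_derive_div x y u _ _ (mannheim_x_derive u Du) (mannheim_y_derive u Du) y0).
Qed.

Lemma mannheim_slant_invariant u : D u ->
  slant_invariant kappab taub u = kappaT u / Rabs (tauT u).
Proof.
intros Du; destruct (mannheim_nondegenerate u Du) as [tT0 y0].
assert (Habs : 0 < Rabs (tauT u)) by now apply Rabs_pos_lt.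
rewrite (slant_invariant_is_derive _ _ _ _ (Rabs (tauT u)) (mannheim_ratio_derive u Du)).
- rewrite mannheim_curvature by assumption.
  replace ((tauT u * y u) ^ 2) with (Rabs (tauT u) ^ 2 * y u ^ 2) by (rewrite pow2_abs; ring).
  field; lra.
- exact Habs.
- rewrite pow2_abs, mannheim_curvature, mannheim_torsion by assumption.
  transitivity (tauT u ^ 2 * (x u ^ 2 + y u ^ 2)); [rewrite (mannheim_unit u Du) |]; ring.
Qed.

Lemma mannheim_not_helix u : D u -> ~ helix D kappab taub.
Proof.
intros Du Hh; destruct (mannheim_nondegenerate u Du) as [_ y0].
assert (E := is_derive_eq _ _ _ _ (mannheim_ratio_derive u Du)
               (helix_ratio_derive_zero D _ _ u HD Du Hh)).
assert (0 < kappaT u / y u ^ 2)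
  by (apply Rdiv_lt_0_compat; [exact (frenet_curvature_pos HF u Du) | now apply pow2_gt_0]).
lra.
Qed.

End MannheimDirection.

Theorem theorem6p7
  (a b : Rbar)
  (* the curve alpha on I = (a,b), unit speed, Frenet apparatus *)
  (alpha T N B : R -> vec) (kappa tau : R -> R)
  (Halpha : frenet (ointerval a b) alpha T N B kappa tau)
  (* arc length s_T = phi(s) of the tangent indicatrix: phi' = kappa *)
  (phi : R -> R)
  (Hphi : forall s, ointerval a b s -> is_derive phi s (kappa s))
  (* tangent indicatrix alpha_T, parametrized by s_T on J = phi(I) *)
  (alphaT TT NT BT : R -> vec) (kappaT tauT : R -> R)
  (HalphaT : forall s, ointerval a b s -> alphaT (phi s) = T s)
  (HalphaT_frenet : frenet (image_dom (ointerval a b) phi)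
                      alphaT TT NT BT kappaT tauT)
  (* the X-direction curve beta, X = x T_T + y N_T + z B_T *)
  (x y z : R -> R)
  (beta Tb Nb Bb : R -> vec) (kappab taub : R -> R)
  (Hxyz : forall sT, image_dom (ointerval a b) phi sT ->
            x sT ^ 2 + y sT ^ 2 + z sT ^ 2 = 1)
  (HX : forall sT, image_dom (ointerval a b) phi sT ->
          Tb sT = vadd (vadd (vscal (x sT) (TT sT)) (vscal (y sT) (NT sT)))
                       (vscal (z sT) (BT sT)))
  (Hbeta : frenet (image_dom (ointerval a b) phi)
             beta Tb Nb Bb kappab taub)
  (* Mannheim-direction condition N_beta = B_T *)
  (HMannheim : forall sT, image_dom (ointerval a b) phi sT ->
                 Nb sT = BT sT) :
  (straight_line (ointerval a b) alpha <->
     helix (image_dom (ointerval a b) phi) kappab taub) /\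
  (slant_helix (ointerval a b) kappa tau <->
     slant_helix (image_dom (ointerval a b) phi) kappab taub).
Proof.
pose proof (open_ointerval a b) as HI.
pose proof (open_image_ointerval a b phi kappa Hphi (frenet_curvature_pos Halpha)) as HJ.
split.
- destruct (classic (exists s0, ointerval a b s0)) as [[s0 Is0] | Hempty].
  + split; intros H; exfalso.
    * exact (frenet_not_straight_line _ _ _ _ _ _ _ s0 HI Is0 Halpha H).
    * exact (mannheim_not_helix HJ HalphaT_frenet Hxyz HX Hbeta HMannheim _
               (image_dom_image _ phi s0 Is0) H).
  + split; intros _.
    * exists 0; intros u [s [Is _]]; exfalso; eauto.
    * exists (0, 0, 0), (1, 0, 0); split.
      -- intros E; injection E; lra.
      -- intros s Is; exfalso; eauto.
- rewrite (slant_helix_iff _ _ _ _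
    (fun s Is => ex_intro _ _ (indicatrix_ratio_derive HI Halpha Hphi HalphaT HalphaT_frenet s Is))
    (indicatrix_slant_invariant HI Halpha Hphi HalphaT HalphaT_frenet)).
  rewrite (slant_helix_iff _ _ _ _
    (fun u Ju => ex_intro _ _ (mannheim_ratio_derive HJ HalphaT_frenet Hxyz HX Hbeta HMannheim u Ju))
    (mannheim_slant_invariant HJ HalphaT_frenet Hxyz HX Hbeta HMannheim)).
  rewrite image_dom_exists_const.
  apply const_ratio_iff_const_inv_abs.
  + intros s Is; exact (frenet_curvature_pos HalphaT_frenet _ (image_dom_image _ phi s Is)).
  + apply (ointerval_image_sign_const a b phi kappa tauT y Hphi).
    * intros u Ju; eexists; exact (mannheim_y_derive HJ HalphaT_frenet HX Hbeta HMannheim u Ju).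
    * intros u Ju; rewrite <- (mannheim_curvature HJ HalphaT_frenet HX Hbeta HMannheim u Ju).
      exact (frenet_curvature_pos Hbeta u Ju).
Qed.
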